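(* Let $t\ge1$, $k\ge1$, $N\ge1$ with $\log k\le N/(4t)$. Let $A^1,\dots,A^k$ be (jointly distributed) random variables, each taking values in $\{0,1\}^N$, such that $\max_{a^1,\dots,a^k}\Pr[A^1\cdots A^k=a^1\cdots a^k]\le2^{-Nk/t}$. Then $$\Pr\Big[\big|\{A^1,\dots,A^k\}\big|\le\tfrac{k}{2t}\Big]\le2^{-Nk/(4t)},$$ i.e., the probability that $A^1,\dots,A^k$ take at most $k/(2t)$ distinct values is at most $2^{-Nk/(4t)}$.
   Context: Logarithms are base 2. *)

From mathcomp Require Import all_boot all_order all_algebra.
From mathcomp Require Import all_classical all_reals all_analysis.
Set Implicit Arguments. Unset Strict Implicit. Unset Printing Implicit Defensive.
Import Order.TTheory GRing.Theory Num.Theory.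
Local Open Scope ring_scope.

(* An outcome of (A^1,...,A^k): a k-indexed family of N-bit strings. *)
Definition outcome (k N : nat) := {ffun 'I_k -> {ffun 'I_N -> bool}}.

Definition is_pmf (R : realType) (T : finType) (P : {ffun T -> R}) : Prop :=
  (forall x, 0 <= P x) /\ \sum_(x : T) P x = 1.

Definition prob (R : realType) (T : finType) (P : {ffun T -> R}) (E : pred T) : R :=
  \sum_(x : T | E x) P x.

Definition ndistinct (k N : nat) (a : outcome k N) : nat :=
  #|[set a i | i : 'I_k]|.

Definition log2 (R : realType) (x : R) : R := ln x / ln 2.

From mathcomp Require Import all_boot all_order all_algebra.
From mathcomp Require Import all_classical all_reals all_analysis.
From mathcomp Require Import ring lra.
Set Implicit Arguments. Unset Strict Implicit. Unset Printing Implicit Defensive.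
Import Order.TTheory GRing.Theory Num.Theory.
Local Open Scope ring_scope.

(* An outcome with at most m distinct values factors through 'I_m: it is
   determined by a map 'I_k -> 'I_m and a table 'I_m -> {0,1}^N.  Hence there
   are at most m^k 2^(Nm) <= 2^(k log k + Nm) such outcomes, each of
   probability at most 2^(-Nk/t); with m <= k/(2t) and log k <= N/(4t) the
   exponents add up to -Nk/(4t). *)

Lemma card_ffun_image_le (I T : finType) (m : nat) (A : pred {ffun I -> T}) :
  (0 < #|T|)%N -> (forall f, A f -> #|[set f i | i : I]| <= m)%N ->
  (#|A| <= m ^ #|I| * #|T| ^ m)%N.
Proof.
case/card_gt0P=> x0 _ A_small.
pose assemble (p : {ffun I -> 'I_m} * {ffun 'I_m -> T}) : {ffun I -> T} :=
  [ffun i => p.2 (p.1 i)].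
have A_sub_codom : {subset A <= codom assemble}.
  move=> f /A_small f_small; set S := [set f i | i : I].
  have index_lt i : (index (f i) (enum S) < m)%N.
    by apply: leq_trans f_small; rewrite cardE index_mem mem_enum imset_f.
  apply/codomP; exists ([ffun i => Ordinal (index_lt i)],
                        [ffun j : 'I_m => nth x0 (enum S) j]).
  by apply/ffunP => i; rewrite !ffunE /= nth_index // mem_enum imset_f.
apply: leq_trans (subset_leq_card (introT fintype.subsetP A_sub_codom)) _.
apply: leq_trans (card_size _) _.
by rewrite size_codom card_prod !card_ffun card_ord.
Qed.

Lemma prob_le_card_mul (R : realType) (T : finType) (P : {ffun T -> R})
    (A : pred T) (c : R) :
  (forall x, P x <= c) -> prob P A <= #|A|%:R * c.
Proof.
move=> le_Pc; apply: le_trans (_ : \sum_(x | A x) c <= _).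
  by apply: ler_sum => x _.
by rewrite sumr_const mulr_natl.
Qed.

Lemma powR2_log2 (R : realType) (x : R) : 0 < x -> 2 `^ log2 x = x.
Proof.
move=> x_gt0; have ln2_gt0 : 0 < ln (2 : R) by apply: ln_gt0; rewrite ltr1n.
by rewrite /powR pnatr_eq0 /= /log2 mulfVK ?gt_eqF // lnK.
Qed.

Lemma card_ndistinct_le (R : realType) (k N m : nat) (A : pred (outcome k N)) :
  (0 < k)%N -> (m <= k)%N -> (forall a, A a -> ndistinct a <= m)%N ->
  #|A|%:R <= 2 `^ (log2 k%:R * k%:R + (N * m)%:R) :> R.
Proof.
move=> k_gt0 m_le_k A_small.
have card_A : (#|A| <= k ^ k * (2 ^ N) ^ m)%N.
  apply: leq_trans (card_ffun_image_le _ A_small) _.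
    by rewrite card_ffun card_bool card_ord expn_gt0.
  by rewrite card_ffun card_bool !card_ord leq_mul // leq_exp2r.
rewrite powRD ?pnatr_eq0 ?implybT // powRrM powR2_log2 ?ltr0n //.
by rewrite !powR_mulrn ?ler0n // -!natrX -natrM ler_nat expnM.
Qed.

Theorem mainTheorem18 (R : realType) (t : R) (k N : nat)
  (ht : 1 <= t) (hk : (1 <= k)%N) (hN : (1 <= N)%N)
  (hlog : log2 (k%:R : R) <= N%:R / (4 * t))
  (P : {ffun outcome k N -> R}) (hP : is_pmf P)
  (hmax : forall a : outcome k N, P a <= 2 `^ (- (N%:R * k%:R / t))) :
  prob P (fun a => (ndistinct a)%:R <= k%:R / (2 * t))
    <= 2 `^ (- (N%:R * k%:R / (4 * t))).
Proof.
set Few : pred (outcome k N) := fun a => (ndistinct a)%:R <= k%:R / (2 * t).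
have t_gt0 : 0 < t by apply: lt_le_trans ht.
have bound_ge0 : 0 <= k%:R / (2 * t) :> R by rewrite divr_ge0 // mulr_ge0 // ltW.
set m := Num.truncn (k%:R / (2 * t)).
have m_le : m%:R <= k%:R / (2 * t) by rewrite truncn_le.
have m_le_k : (m <= k)%N.
  rewrite -(ler_nat R); apply: le_trans m_le _.
  by rewrite ler_pdivrMr ?mulr_gt0 //; apply: ler_peMr => //; lra.
have card_Few : #|Few|%:R <= 2 `^ (log2 k%:R * k%:R + (N * m)%:R) :> R.
  by apply: card_ndistinct_le => // a Few_a; rewrite /m truncn_ge_nat.
apply: le_trans (prob_le_card_mul Few hmax) _.
apply: le_trans (ler_wpM2r (powR_ge0 _ _) card_Few) _.
rewrite -powRD ?pnatr_eq0 ?implybT //; apply: ler_powR; first by rewrite ler1n.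
have k_log : log2 k%:R * k%:R <= N%:R / (4 * t) * k%:R by rewrite ler_wpM2r.
have N_m : (N * m)%:R <= N%:R * (k%:R / (2 * t)) :> R by rewrite natrM ler_wpM2l.
have exponents : N%:R / (4 * t) * k%:R + N%:R * (k%:R / (2 * t))
    - N%:R * k%:R / t = - (N%:R * k%:R / (4 * t)) :> R.
  by field; rewrite ?mulf_neq0 ?gt_eqF // ?pnatr_eq0.
lra.
Qed.
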